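(* Let $T$ be a Dunford–Schwartz operator on $l_\infty$. Then for each $x\in c_0$ there exists $\widehat{x}\in c_0$ such that $$\Big\|\frac1n\sum_{k=0}^{n-1}T^k(x)-\widehat{x}\Big\|_\infty\to 0 \quad (n\to\infty).$$
   Context: $l_\infty$ is the space of bounded real sequences with $\|x\|_\infty=\sup_n|(x)_n|$; $c_0$ is the subspace of sequences converging to $0$; $l_1$ is the space of absolutely summable sequences with $\|x\|_1=\sum_n|(x)_n|$. A linear operator $T:l_\infty\to l_\infty$ is a Dunford–Schwartz operator if $\|T(x)\|_1\le\|x\|_1$ for all $x\in l_1$ and $\|T(x)\|_\infty\le\|x\|_\infty$ for all $x\in l_\infty$. *)

From HB Require Import structures.
From mathcomp Require Import all_boot all_order all_algebra.
From mathcomp Require Import all_classical all_reals all_analysis.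
Set Implicit Arguments. Unset Strict Implicit. Unset Printing Implicit Defensive.
Import Order.TTheory GRing.Theory Num.Theory.
Import numFieldNormedType.Exports.
Local Open Scope classical_set_scope.
Local Open Scope ring_scope.

Section SeqSpaces.
Variable R : realType.

Definition in_linf (x : nat -> R) : Prop := exists M : R, forall n, `|x n| <= M.

Definition in_c0 (x : nat -> R) : Prop := x @ \oo --> (0 : R).

Definition in_l1 (x : nat -> R) : Prop :=
  cvg (series (fun k => `|x k|) @ \oo).

Definition norm_inf (x : nat -> R) : R := sup (range (fun n => `|x n|)).

Definition norm_1 (x : nat -> R) : R := limn (series (fun k => `|x k|)).

Definition dunford_schwartz (T : (nat -> R) -> (nat -> R)) : Prop :=
  [/\ (forall x, in_linf x -> in_linf (T x)),
      (forall (a : R) x y, in_linf x -> in_linf y ->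
          T (fun n => a * x n + y n) = (fun n => a * T x n + T y n)),
      (forall x, in_l1 x -> in_l1 (T x) /\ norm_1 (T x) <= norm_1 x)
    & (forall x, in_linf x -> norm_inf (T x) <= norm_inf x)].

Definition ds_cesaro (T : (nat -> R) -> (nat -> R)) (x : nat -> R) (n : nat) : nat -> R :=
  fun i => (n%:R)^-1 * \sum_(k < n) iter k T x i.

End SeqSpaces.

From HB Require Import structures.
From mathcomp Require Import all_boot all_order all_algebra.
From mathcomp Require Import all_classical all_reals all_analysis.
From mathcomp Require Import ring lra.
Import Order.TTheory GRing.Theory Num.Theory.
Import numFieldNormedType.Exports.
Local Open Scope classical_set_scope.
Local Open Scope ring_scope.

(* A Dunford-Schwartz operator contracts both l_1 and l_oo, so the columns and
   the rows of its matrix (T e_j)_i have absolute sums at most 1, and by the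
   Schur test T contracts l_2.  On l_2 the Cesaro averages A_n x converge
   (von Neumann): let c be the infimum of |z|_2^2 over the convex hull of the
   orbit (T^k x)_k.  For z in the hull with |z|_2^2 close to c, A_n x - A_n z
   tends to 0 while |A_n z|_2 <= |z|_2, so |A_n x|_2^2 is eventually close to
   c; since the midpoint of A_n x and A_m x lies in the hull, the parallelogram
   law makes (A_n x) Cauchy in l_2, hence uniformly.  Finitely supported
   sequences are l_oo-dense in c_0 and the averages contract l_oo, so for
   x in c_0 the averages are still uniformly Cauchy, and their uniform limit
   lies in c_0 because every A_n x does. *)

Set Implicit Arguments. Unset Strict Implicit. Unset Printing Implicit Defensive.

Section Sequences.
Variable R : realType.
Implicit Types (x y z : nat -> R) (f g : nat -> nat -> R).

Lemma normr_le_norm_inf x i : in_linf x -> `|x i| <= norm_inf x.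
Proof.
move=> [M hM]; apply: ub_le_sup; last by exists i.
by exists M => _ [j _ <-].
Qed.

Lemma norm_inf_le x e : (forall i, `|x i| <= e) -> norm_inf x <= e.
Proof. by move=> hx; apply: ge_sup; [exists `|x 0%N|, 0%N | move=> _ [j _ <-]]. Qed.

Lemma norm_inf_ge0 x : in_linf x -> 0 <= norm_inf x.
Proof. by move=> hx; apply: le_trans (normr_le_norm_inf 0 hx). Qed.

Lemma in_linf_lin (a : R) x y :
  in_linf x -> in_linf y -> in_linf (fun n => a * x n + y n).
Proof.
move=> [M hM] [N hN]; exists (`|a| * M + N) => n.
by rewrite (le_trans (ler_normD _ _)) // normrM lerD // ler_wpM2l.
Qed.

Lemma in_linf_comb K (c : nat -> R) (w : nat -> nat -> R) :
  (forall k, in_linf (w k)) -> in_linf (fun n => \sum_(k < K) c k * w k n).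
Proof.
move=> hw; elim: K => [|K IH]; first by exists 0 => n; rewrite big_ord0 normr0.
under eq_fun do rewrite big_ord_recr /= addrC.
exact: in_linf_lin.
Qed.

Lemma in_c0P x :
  in_c0 x <-> forall e, 0 < e -> exists N, forall i, (N <= i)%N -> `|x i| <= e.
Proof.
split=> [/cvgrPdist_le hx e e_gt0 | hx].
  by have [N _ hN] := hx e e_gt0; exists N => i /hN; rewrite /= sub0r normrN.
apply/cvgrPdist_le => e /hx [N hN]; exists N => // i /hN.
by rewrite /= sub0r normrN.
Qed.

Lemma in_c0_in_linf x : in_c0 x -> in_linf x.
Proof.
move=> hx; have [M [_ hM]] := cvg_seq_bounded (cvgP _ hx).
by exists (M + 1) => n; apply: (hM (M + 1)); rewrite ?ltrDl.
Qed.

Lemma in_c0_approx x :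
  (forall e, 0 < e -> exists2 z, in_c0 z & forall i, `|x i - z i| <= e) ->
  in_c0 x.
Proof.
move=> hx; apply/in_c0P => e e_gt0.
have [z /in_c0P hz hxz] := hx _ (divr_gt0 e_gt0 (ltr0Sn _ 1)).
have [N hN] := hz _ (divr_gt0 e_gt0 (ltr0Sn _ 1)); exists N => i /hN hzi.
rewrite -(subrK (z i) (x i)) (le_trans (ler_normD _ _)) //.
by rewrite (splitr e) lerD.
Qed.

Definition unif_cauchy f := forall e, 0 < e -> exists N, forall n m,
  (N <= n)%N -> (N <= m)%N -> forall i, `|f n i - f m i| <= e.

Definition unif_cvg f y := forall e, 0 < e ->
  exists N, forall n, (N <= n)%N -> forall i, `|f n i - y i| <= e.

Lemma unif_cauchy_approx f :
  (forall e, 0 < e ->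
     exists2 g, unif_cauchy g & forall n i, `|f n i - g n i| <= e) ->
  unif_cauchy f.
Proof.
move=> hf e e_gt0; have e3_gt0 : 0 < e / 3 by rewrite divr_gt0.
have [g hg hfg] := hf _ e3_gt0; have [N hN] := hg _ e3_gt0.
exists N => n m hn hm i.
have -> : f n i - f m i = (f n i - g n i) + (g n i - g m i) - (f m i - g m i).
  by ring.
rewrite (le_trans (ler_normB _ _)) // (le_trans (lerD (ler_normD _ _) (lexx _))) //.
have -> : e = e / 3 + e / 3 + e / 3 by field.
by rewrite !lerD ?hN.
Qed.

Lemma unif_cauchy_cvg f : unif_cauchy f -> exists y, unif_cvg f y.
Proof.
move=> hf; have hcvg i : cvgn (f ^~ i).
  apply/cauchy_cvgP/cauchy_exP => e e_gt0.
  have [N hN] := hf _ (divr_gt0 e_gt0 (ltr0Sn _ 1)).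
  exists (f N i); exists N => // n hn; rewrite /ball /=.
  by have := hN _ _ (leqnn N) hn i; lra.
exists (fun i => limn (f ^~ i)) => e e_gt0.
have [N hN] := hf _ e_gt0; exists N => n hn i.
have : (fun m => `|f n i - f m i|) @ \oo --> `|f n i - limn (f ^~ i)|.
  exact: cvg_norm (cvgB (cvg_cst _) (hcvg i)).
move=> hlim; apply: (closed_cvg _ (@closed_le _ e) _ _ hlim).
by near=> m; apply: hN => //; near: m; exists N.
Unshelve. all: by end_near.
Qed.

Lemma unif_cvg_in_c0 f y : (forall n, in_c0 (f n)) -> unif_cvg f y -> in_c0 y.
Proof.
move=> hf hfy; apply: in_c0_approx => e /hfy [N hN].
by exists (f N) => // i; rewrite distrC hN.
Qed.

Lemma unif_cvg_norm_inf f y :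
  unif_cvg f y -> (fun n => norm_inf (fun i => f n i - y i)) @ \oo --> 0.
Proof.
move=> hfy; apply/cvgrPdist_le => e /hfy [N hN]; exists N => // n /hN hn /=.
rewrite sub0r normrN ger0_norm ?norm_inf_le //.
by apply: norm_inf_ge0; exists e.
Qed.

Lemma sumr_sub_succ (g : nat -> R) k : \sum_(j < k) (g j - g j.+1) = g 0%N - g k.
Proof.
elim: k => [|k IH]; first by rewrite big_ord0 subrr.
by rewrite big_ord_recr /= IH addrA subrK.
Qed.

Lemma eventually_div_sqr_le (a e : R) : 0 < e ->
  exists N, forall n, (N <= n)%N -> a / n%:R ^+ 2 <= e.
Proof.
move=> e_gt0; exists (Num.Def.archi_bound (`|a| / e)).+1 => n hn.
have n_gt0 : 0 < n%:R :> R by rewrite ltr0n (leq_trans _ hn).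
have : `|a| / e < n%:R.
  apply: lt_le_trans (archi_boundP (divr_ge0 (normr_ge0 a) (ltW e_gt0))) _.
  by rewrite ler_nat; apply: ltnW.
rewrite ltr_pdivrMr // => lt_a_ne.
rewrite ler_pdivrMr ?exprn_gt0 // (le_trans (ler_norm a)) // expr2 mulrA.
rewrite (le_trans (ltW lt_a_ne)) // [e * _]mulrC ler_pMr ?mulr_gt0 //.
by rewrite ler1n (leq_trans _ hn).
Qed.

Definition unit_seq j : nat -> R := fun n => (n == j)%:R.

Definition trunc M x : nat -> R := fun n => if (n < M)%N then x n else 0.

Lemma trunc_comb_unit M x :
  trunc M x = (fun n => \sum_(j < M) x j * unit_seq j n).
Proof.
apply: funext => n; elim: M => [|M IH]; first by rewrite big_ord0.
rewrite big_ord_recr /= -IH /trunc /unit_seq ltnS.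
by case: ltngtP => h; rewrite ?mulr0 ?addr0 ?mulr1 ?add0r ?h.
Qed.

Lemma in_linf_unit_seq j : in_linf (unit_seq j).
Proof.
by exists 1 => n; rewrite /unit_seq; case: (n == j); rewrite ?normr1 ?normr0.
Qed.

Lemma sum_trunc K1 K (l : nat -> R) : (K1 <= K)%N ->
  \sum_(k < K) trunc K1 l k = \sum_(k < K1) l k.
Proof.
move=> hK; rewrite (big_ord_widen K l hK) [RHS]big_mkcond.
by apply: eq_bigr => k _; rewrite /trunc; case: ifP.
Qed.

Lemma trunc_mulr M (l f : nat -> R) k :
  trunc M l k * f k = trunc M (fun k => l k * f k) k.
Proof. by rewrite /trunc; case: ifP; rewrite ?mul0r. Qed.

Lemma in_linf_trunc M x : in_linf (trunc M x).
Proof.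
by rewrite trunc_comb_unit; apply: in_linf_comb => j; exact: in_linf_unit_seq.
Qed.

Lemma trunc_approx x e : in_c0 x -> 0 < e ->
  exists M0, forall M, (M0 <= M)%N -> forall i, `|x i - trunc M x i| <= e.
Proof.
move=> /in_c0P hx e_gt0; have [M0 hM0] := hx e e_gt0.
exists M0 => M hM i; rewrite /trunc.
case: ltnP => [_|hi]; first by rewrite subrr normr0 ltW.
by rewrite subr0 hM0 // (leq_trans hM).
Qed.

Definition sqsum N x := \sum_(i < N) x i ^+ 2.

Definition l2_le x B := forall N, sqsum N x <= B.

Definition sqnorm x := sup (range (sqsum ^~ x)).

Lemma sqsum_ge0 N x : 0 <= sqsum N x.
Proof. by apply: sumr_ge0 => i _; exact: sqr_ge0. Qed.

Lemma sqsumS N x : sqsum N.+1 x = sqsum N x + x N ^+ 2.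
Proof. by rewrite /sqsum big_ord_recr. Qed.

Lemma le_sqsum x N N' : (N <= N')%N -> sqsum N x <= sqsum N' x.
Proof.
move=> /subnKC <-; elim: (N' - N)%N => [|k IH]; first by rewrite addn0.
by rewrite addnS sqsumS (le_trans IH) // lerDl sqr_ge0.
Qed.

Lemma sqsum_add_sqr_le x N i : (N <= i)%N -> sqsum N x + x i ^+ 2 <= sqsum i.+1 x.
Proof. by move=> hi; rewrite sqsumS lerD2r le_sqsum. Qed.

Lemma sqr_le_sqsum x N i : (i < N)%N -> x i ^+ 2 <= sqsum N x.
Proof.
by move=> hi; rewrite (le_trans _ (le_sqsum x hi)) // sqsumS lerDr sqsum_ge0.
Qed.

Lemma l2_le_ge0 x B : l2_le x B -> 0 <= B.
Proof. by move=> hx; apply: le_trans (sqsum_ge0 0 x) (hx 0%N). Qed.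

Lemma l2_le_sqnorm x B : l2_le x B -> l2_le x (sqnorm x).
Proof. by move=> hx N; apply: ub_le_sup; [exists B => _ [M _ <-] | exists N]. Qed.

Lemma sqnorm_adherent x B e : l2_le x B -> 0 < e ->
  exists N, sqnorm x - e < sqsum N x.
Proof.
move=> hx e_gt0; have [] := sup_adherent e_gt0 (_ : has_sup (range (sqsum ^~ x))).
- by split; [exists (sqsum 0 x), 0%N | exists B => _ [M _ <-]].
- by move=> _ [N _ <-]; exists N.
Qed.

Lemma normr_le_of_sqr (a e : R) : 0 <= e -> a ^+ 2 <= e ^+ 2 -> `|a| <= e.
Proof.
by move=> e_ge0 ha; rewrite -ler_sqr ?nnegrE // real_normK ?num_real.
Qed.

Lemma l2_le_in_c0 x B : l2_le x B -> in_c0 x.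
Proof.
move=> hx; apply/in_c0P => e e_gt0.
have [N hN] := sqnorm_adherent hx (mulr_gt0 e_gt0 e_gt0).
exists N => i hi; apply: normr_le_of_sqr; first exact: ltW.
have := l2_le_sqnorm hx i.+1; have := sqsum_add_sqr_le x hi; rewrite expr2; lra.
Qed.

Lemma sqsum_trunc N M x : sqsum N (trunc M x) = sqsum (minn N M) x.
Proof.
elim: N => [|N IH]; first by rewrite min0n /sqsum !big_ord0.
rewrite sqsumS IH /trunc; case: ltnP => hNM.
  by rewrite (minn_idPl hNM) sqsumS.
by rewrite expr0n addr0 (minn_idPr (leqW hNM)).
Qed.

Lemma l2_le_trunc M x : l2_le (trunc M x) (sqsum M x).
Proof. by move=> N; rewrite sqsum_trunc le_sqsum // geq_minr. Qed.

Lemma sqr_comb_le K (a w : nat -> R) :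
  (\sum_(k < K) a k * w k) ^+ 2 <=
  (\sum_(k < K) `|a k|) * \sum_(k < K) `|a k| * w k ^+ 2.
Proof.
(* Expanding both sides as double sums over (k, l), this is termwise
   2 |w k| |w l| <= w k ^+ 2 + w l ^+ 2, weighted by |a k| |a l|. *)
set s := \sum_(k < K) `|a k| * `|w k|.
have s_ge0 : 0 <= s by apply: sumr_ge0 => k _; rewrite mulr_ge0.
have le_s : (\sum_(k < K) a k * w k) ^+ 2 <= s ^+ 2.
  rewrite -real_normK ?num_real // ler_sqr ?nnegrE //.
  by rewrite (le_trans (ler_norm_sum _ _ _)) // ler_sum // => k _; rewrite normrM.
apply: (le_trans le_s); set r := _ * _.
have r1 : r = \sum_(k < K) \sum_(l < K) `|a k| * (`|a l| * w l ^+ 2).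
  by rewrite /r mulr_suml; under eq_bigr do rewrite mulr_sumr.
have r2 : r = \sum_(k < K) \sum_(l < K) `|a l| * (`|a k| * w k ^+ 2).
  by rewrite r1 exchange_big.
have s2 : s ^+ 2 = \sum_(k < K) \sum_(l < K) (`|a k| * `|w k|) * (`|a l| * `|w l|).
  by rewrite expr2 /s mulr_suml; under eq_bigr do rewrite mulr_sumr.
rewrite -(ler_pM2l (ltr0Sn R 1)) [X in _ <= X]mulr_natl [r *+ 2]mulr2n.
rewrite {1}r1 r2 -big_split s2.
rewrite mulr_sumr; apply: ler_sum => k _; rewrite -big_split mulr_sumr.
apply: ler_sum => l _ /=.
have := mulr_ge0 (normr_ge0 (a k)) (normr_ge0 (a l)).
have := sqr_ge0 (`|w k| - `|w l|); rewrite -!(real_normK (num_real (w _))).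
nra.
Qed.

Lemma l2_le_comb K (a : nat -> R) (w : nat -> nat -> R) B :
  (forall k : 'I_K, l2_le (w k) B) ->
  l2_le (fun i => \sum_(k < K) a k * w k i) ((\sum_(k < K) `|a k|) ^+ 2 * B).
Proof.
move=> hw N; have a_ge0 : 0 <= \sum_(k < K) `|a k| by rewrite sumr_ge0.
have row (i : 'I_N) := sqr_comb_le K a (w ^~ i).
rewrite /sqsum (le_trans (ler_sum _ (fun i _ => row i))) //.
rewrite -mulr_sumr exchange_big expr2 -mulrA ler_wpM2l // mulr_suml.
by apply: ler_sum => k _; rewrite -mulr_sumr ler_wpM2l //; exact: hw.
Qed.

Lemma sqsum_scale N (c : R) x : sqsum N (fun i => c * x i) = c ^+ 2 * sqsum N x.
Proof. by rewrite /sqsum mulr_sumr; apply: eq_bigr => i _; rewrite exprMn. Qed.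

Lemma sqsum_parallelogram N x y :
  sqsum N (fun i => x i - y i) =
  2 * sqsum N x + 2 * sqsum N y - 4 * sqsum N (fun i => (x i + y i) / 2).
Proof.
rewrite /sqsum !mulr_sumr -big_split -sumrB.
by apply: eq_bigr => i _ /=; field.
Qed.

Lemma sqsum_sub_le N x y :
  sqsum N (fun i => x i - y i) <= 2 * sqsum N x + 2 * sqsum N y.
Proof. by rewrite sqsum_parallelogram gerBl mulr_ge0 ?sqsum_ge0. Qed.

Lemma sqsum_le_split N x z (t : R) : 0 < t ->
  sqsum N x <= (1 + t) * sqsum N z + (1 + t^-1) * sqsum N (fun i => x i - z i).
Proof.
move=> t_gt0; rewrite /sqsum !mulr_sumr -big_split /=; apply: ler_sum => i _.
have tV_ge0 : 0 <= t^-1 by rewrite invr_ge0 ltW.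
have := mulr_ge0 tV_ge0 (sqr_ge0 (t * z i - (x i - z i))).
have -> : t^-1 * (t * z i - (x i - z i)) ^+ 2 =
    (1 + t) * z i ^+ 2 + (1 + t^-1) * (x i - z i) ^+ 2 - x i ^+ 2.
  by field; rewrite gt_eqF.
lra.
Qed.

Lemma cvg_sqsum N (f : nat -> nat -> R) y :
  (forall i, f ^~ i @ \oo --> y i) -> (fun M => sqsum N (f M)) @ \oo --> sqsum N y.
Proof.
move=> hf; elim: N => [|N IH].
  by rewrite /sqsum big_ord0; under eq_fun do rewrite big_ord0; exact: cvg_cst.
under eq_fun do rewrite sqsumS; rewrite sqsumS; apply: cvgD => //.
by rewrite expr2; under eq_fun do rewrite expr2; exact: cvgM.
Qed.

End Sequences.

Arguments unit_seq {R} j.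

Section DunfordSchwartz.
Variable R : realType.
Variable T : (nat -> R) -> (nat -> R).
Hypothesis T_linf : forall x, in_linf x -> in_linf (T x).
Hypothesis T_linear : forall (a : R) x y, in_linf x -> in_linf y ->
  T (fun n => a * x n + y n) = (fun n => a * T x n + T y n).
Hypothesis T_l1 : forall x, in_l1 x -> in_l1 (T x) /\ norm_1 (T x) <= norm_1 x.
Hypothesis T_norm_inf : forall x, in_linf x -> norm_inf (T x) <= norm_inf x.
Implicit Types (x y z : nat -> R).

Local Notation A := (ds_cesaro T).

Lemma T0 : T (fun=> 0) = fun=> 0.
Proof.
have lin0 : in_linf (fun=> 0 : R) by exists 0 => n; rewrite normr0.
have := T_linear (-1) lin0 lin0; under eq_fun do rewrite mulr0 addr0.
by move=> ->; apply: funext => n; rewrite mulN1r addNr.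
Qed.

Lemma T_comb K (c : nat -> R) (w : nat -> nat -> R) :
  (forall k, in_linf (w k)) ->
  T (fun n => \sum_(k < K) c k * w k n) = (fun n => \sum_(k < K) c k * T (w k) n).
Proof.
move=> hw; elim: K => [|K IH].
  under eq_fun do rewrite big_ord0.
  by rewrite T0; apply: funext => n; rewrite big_ord0.
under eq_fun do rewrite big_ord_recr /= addrC.
rewrite T_linear ?IH //; last exact: in_linf_comb.
by apply: funext => n; rewrite big_ord_recr /= addrC.
Qed.

Lemma T_sub x y : in_linf x -> in_linf y ->
  T (fun n => x n - y n) = (fun n => T x n - T y n).
Proof.
move=> hx hy; have := T_linear (-1) hy hx; under eq_fun do rewrite mulN1r addrC.
by move=> ->; apply: funext => n; rewrite mulN1r addrC.
Qed.

Lemma normr_T_le x e i : (forall j, `|x j| <= e) -> `|T x i| <= e.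
Proof.
move=> hx; have x_linf : in_linf x by exists e.
rewrite (le_trans (normr_le_norm_inf i (T_linf x_linf))) //.
by rewrite (le_trans (T_norm_inf x_linf)) // norm_inf_le.
Qed.

Lemma in_linf_iter k x : in_linf x -> in_linf (iter k T x).
Proof. by move=> hx; elim: k => [|k IH] //=; exact: T_linf. Qed.

Lemma normr_iter_le k x e i : (forall j, `|x j| <= e) -> `|iter k T x i| <= e.
Proof. by move=> hx; elim: k i => [|k IH] i //=; exact: normr_T_le. Qed.

Lemma iter_comb j K (c : nat -> R) (w : nat -> nat -> R) :
  (forall k, in_linf (w k)) ->
  iter j T (fun n => \sum_(k < K) c k * w k n) =
  (fun n => \sum_(k < K) c k * iter j T (w k) n).
Proof.
move=> hw; elim: j => [|j IH] //=.
by rewrite IH (@T_comb K c (fun k => iter j T (w k))) // => k; exact: in_linf_iter.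
Qed.

Lemma iter_sub k x y : in_linf x -> in_linf y ->
  iter k T (fun n => x n - y n) = (fun n => iter k T x n - iter k T y n).
Proof.
move=> hx hy; elim: k => [|k IH] //=.
by rewrite IH T_sub //; exact: in_linf_iter.
Qed.

Lemma cesaro_comb n K (c : nat -> R) (w : nat -> nat -> R) i :
  (forall k, in_linf (w k)) ->
  A (fun n => \sum_(k < K) c k * w k n) n i = \sum_(k < K) c k * A (w k) n i.
Proof.
move=> hw; rewrite /ds_cesaro.
under eq_bigr do rewrite iter_comb //.
rewrite exchange_big mulr_sumr; apply: eq_bigr => k _.
by rewrite -mulr_sumr mulrCA.
Qed.

Lemma cesaro_sub x y n i : in_linf x -> in_linf y ->
  A (fun k => x k - y k) n i = A x n i - A y n i.
Proof.
move=> hx hy; rewrite /ds_cesaro -mulrBr -sumrB.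
by under eq_bigr do rewrite iter_sub //.
Qed.

Lemma normr_cesaro_le x e n i : (forall j, `|x j| <= e) -> `|A x n i| <= e.
Proof.
move=> hx; rewrite /ds_cesaro normrM ger0_norm ?invr_ge0 //.
case: n => [|n]; first by rewrite invr0 mul0r (le_trans _ (hx 0%N)).
rewrite mulrC ler_pdivrMr ?ltr0n // (le_trans (ler_norm_sum _ _ _)) //.
apply: le_trans (_ : \sum_(k < n.+1) e <= _).
  by apply: ler_sum => k _; exact: normr_iter_le.
by rewrite sumr_const card_ord mulr_natr.
Qed.

Lemma T_trunc M x i : T (trunc M x) i = \sum_(j < M) x j * T (unit_seq j) i.
Proof. by rewrite trunc_comb_unit T_comb //; exact: in_linf_unit_seq. Qed.

Lemma col_sum_le1 j N : \sum_(i < N) `|T (unit_seq j) i| <= 1.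
Proof.
have cvg1 : series (fun k => `|unit_seq j k|) @ \oo --> (1 : R).
  apply: cvg_near_cst; exists j.+1 => // n hn.
  have -> : series (fun k => `|unit_seq j k|) n = trunc n (fun=> 1 : R) j.
    rewrite trunc_comb_unit seriesEord; apply: eq_bigr => k _.
    by rewrite /unit_seq eq_sym mul1r; case: eqP; rewrite ?normr1 ?normr0.
  by rewrite /trunc hn.
have [Tl1] := T_l1 (cvgP _ cvg1); rewrite {2}/norm_1 (cvg_lim _ cvg1) //.
apply: le_trans; have -> : \sum_(i < N) `|T (unit_seq j) i| =
  series (fun k => `|T (unit_seq j) k|) N by rewrite seriesEord.
by apply: nondecreasing_cvgn_le => //; exact: nondecreasing_series.
Qed.

Lemma row_sum_le1 i M : \sum_(j < M) `|T (unit_seq j) i| <= 1.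
Proof.
pose s j : R := if 0 <= T (unit_seq j) i then 1 else -1.
have -> : \sum_(j < M) `|T (unit_seq j) i| = T (trunc M s) i.
  rewrite T_trunc; apply: eq_bigr => j _; rewrite /s.
  by case: lerP => h; [rewrite mul1r ger0_norm | rewrite mulN1r ltr0_norm].
apply: le_trans (ler_norm _) _; apply: normr_T_le => n.
rewrite /trunc /s; case: ifP => _; rewrite ?normr0 //.
by case: ifP; rewrite ?normrN normr1.
Qed.

Lemma sqsum_T_trunc_le N M y : sqsum N (T (trunc M y)) <= sqsum M y.
Proof.
rewrite /sqsum; under eq_bigr do rewrite T_trunc.
have row i : (\sum_(j < M) y j * T (unit_seq j) i) ^+ 2 <=
             \sum_(j < M) `|T (unit_seq j) i| * y j ^+ 2.
  under eq_bigr do rewrite mulrC.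
  apply: le_trans (sqr_comb_le M (fun j => T (unit_seq j) i) y) _.
  rewrite ler_piMl ?row_sum_le1 //.
  by rewrite sumr_ge0 // => j _; rewrite mulr_ge0 ?sqr_ge0.
rewrite (le_trans (ler_sum _ (fun (i : 'I_N) _ => row i))) // exchange_big.
by apply: ler_sum => j _; rewrite -mulr_suml ler_piMl ?sqr_ge0 ?col_sum_le1.
Qed.

Lemma l2_le_T y B : l2_le y B -> l2_le (T y) B.
Proof.
move=> hy N; have y_c0 := l2_le_in_c0 hy; have y_linf := in_c0_in_linf y_c0.
have hcvg i : (fun M => T (trunc M y) i) @ \oo --> T y i.
  apply/cvgrPdist_le => e e_gt0; have [M0 hM0] := trunc_approx y_c0 e_gt0.
  exists M0 => // M /hM0 /(normr_T_le i).
  by rewrite T_sub //; exact: in_linf_trunc.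
have hS := @cvg_sqsum R N (fun M => T (trunc M y)) (T y) hcvg.
apply: (closed_cvg _ (@closed_le _ B) _ _ hS).
by near=> M; exact: le_trans (sqsum_T_trunc_le N M y) (hy M).
Unshelve. all: by end_near.
Qed.

Lemma l2_le_iter k y B : l2_le y B -> l2_le (iter k T y) B.
Proof. by move=> hy; elim: k => [|k IH] //=; exact: l2_le_T. Qed.

Lemma l2_le_cesaro n y B : l2_le y B -> l2_le (A y n) B.
Proof.
move=> hy N; have B_ge0 := l2_le_ge0 hy.
have -> : A y n = fun i => \sum_(k < n) n%:R^-1 * iter k T y i.
  by apply: funext => i; rewrite /ds_cesaro mulr_sumr.
apply: (le_trans (l2_le_comb (fun=> n%:R^-1) (fun k : 'I_n => l2_le_iter k hy) N)).
rewrite sumr_const card_ord ger0_norm ?invr_ge0 //.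
case: n => [|n]; first by rewrite mulr0n expr0n mul0r.
by rewrite -[_ *+ _]mulr_natr mulVf ?pnatr_eq0 // expr1n mul1r.
Qed.

Definition orbit_hull x z := exists K (l : nat -> R),
  [/\ forall k, 0 <= l k, \sum_(k < K) l k = 1
    & z = fun i => \sum_(k < K) l k * iter k T x i].

Lemma orbit_hull_self x : orbit_hull x x.
Proof.
exists 1%N, (fun=> 1); split => //; first by rewrite big_ord1.
by apply: funext => i; rewrite big_ord1 mul1r.
Qed.

Lemma orbit_hull_l2 x z B : l2_le x B -> orbit_hull x z -> l2_le z B.
Proof.
move=> hx [K [l [l_ge0 l1 ->]]].
have -> : B = (\sum_(k < K) `|l k|) ^+ 2 * B.
  by under eq_bigr do rewrite ger0_norm //; rewrite l1 expr1n mul1r.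
exact: l2_le_comb (fun k : 'I_K => l2_le_iter k hx).
Qed.

Lemma orbit_hull_cesaro x n : (0 < n)%N -> orbit_hull x (A x n).
Proof.
move=> n_gt0; exists n, (fun=> n%:R^-1); split => [k||].
- by rewrite invr_ge0.
- by rewrite sumr_const card_ord -[_ *+ _]mulr_natr mulVf // pnatr_eq0 -lt0n.
- by apply: funext => i; rewrite /ds_cesaro mulr_sumr.
Qed.

Lemma orbit_hull_midpoint x z1 z2 : orbit_hull x z1 -> orbit_hull x z2 ->
  orbit_hull x (fun i => (z1 i + z2 i) / 2).
Proof.
move=> [K1 [l1 [l1_ge0 l1_1 ->]]] [K2 [l2 [l2_ge0 l2_1 ->]]].
have [le1 le2] := (leq_maxl K1 K2, leq_maxr K1 K2).
exists (maxn K1 K2), (fun k => (trunc K1 l1 k + trunc K2 l2 k) / 2); split.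
- by move=> k; rewrite divr_ge0 // addr_ge0 // /trunc; case: ifP.
- by rewrite -mulr_suml big_split /= !sum_trunc // l1_1 l2_1 divff.
- apply: funext => i.
  pose u k := iter k T x i.
  under [RHS]eq_bigr do rewrite mulrAC mulrDl (trunc_mulr _ _ u) (trunc_mulr _ _ u).
  by rewrite -mulr_suml big_split /= !sum_trunc.
Qed.

Lemma cesaro_sub_T y n i :
  A y n i - A (T y) n i = n%:R^-1 * (y i - iter n T y i).
Proof.
rewrite /ds_cesaro -mulrBr -sumrB.
by under eq_bigr do rewrite -iterSr; rewrite (sumr_sub_succ (fun k => iter k T y i)).
Qed.

Lemma l2_le_cesaro_sub_T y B n : l2_le y B ->
  l2_le (fun i => A y n i - A (T y) n i) (4 * B / n%:R ^+ 2).
Proof.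
move=> hy N; under eq_fun do rewrite cesaro_sub_T.
rewrite sqsum_scale exprVn mulrC ler_wpM2r ?invr_ge0 ?exprn_ge0 //.
apply: le_trans (sqsum_sub_le _ _ _) _.
by have := hy N; have := l2_le_iter n hy N; lra.
Qed.

Lemma l2_le_cesaro_sub_iter x B n k : l2_le x B ->
  l2_le (fun i => A x n i - A (iter k T x) n i) ((2 * k%:R) ^+ 2 * B / n%:R ^+ 2).
Proof.
move=> hx.
have -> : (fun i => A x n i - A (iter k T x) n i) =
          fun i => \sum_(j < k) 1 * (A (iter j T x) n i - A (T (iter j T x)) n i).
  apply: funext => i; under eq_bigr do rewrite mul1r -iterS.
  by rewrite (sumr_sub_succ (fun j => A (iter j T x) n i)).
have hj (j : 'I_k) := l2_le_cesaro_sub_T n (l2_le_iter j hx).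
move=> N; apply: (le_trans (@l2_le_comb _ k (fun=> 1)
  (fun j i => A (iter j T x) n i - A (T (iter j T x)) n i) _ hj N)).
by rewrite sumr_const card_ord normr1 -[_ *+ _]mulr_natr mul1r; lra.
Qed.

Lemma cesaro_sub_hull_small x z B e : l2_le x B -> orbit_hull x z -> 0 < e ->
  exists N, forall n, (N <= n)%N -> l2_le (fun i => A x n i - A z n i) e.
Proof.
move=> hx [K [l [l_ge0 l1 ->]]] e_gt0.
have [N hN] := eventually_div_sqr_le ((2 * K%:R) ^+ 2 * B) e_gt0.
exists N => n /hN le_e; have x_linf := in_c0_in_linf (l2_le_in_c0 hx).
have -> : (fun i => A x n i - A (fun i => \sum_(k < K) l k * iter k T x i) n i) =
          fun i => \sum_(k < K) l k * (A x n i - A (iter k T x) n i).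
  apply: funext => i; rewrite cesaro_comb; last by move=> k; exact: in_linf_iter.
  by under [RHS]eq_bigr do rewrite mulrBr; rewrite sumrB -mulr_suml l1 mul1r.
have hk (k : 'I_K) : l2_le (fun i => A x n i - A (iter k T x) n i) e.
  move=> M; rewrite (le_trans (l2_le_cesaro_sub_iter n k hx M)) //.
  rewrite (le_trans _ le_e) //.
  rewrite ler_wpM2r ?invr_ge0 ?exprn_ge0 // ler_wpM2r ?(l2_le_ge0 hx) //.
  by rewrite ler_sqr ?nnegrE // ler_wpM2l // ler_nat ltnW.
move=> M; apply: (le_trans
  (@l2_le_comb _ K l (fun k i => A x n i - A (iter k T x) n i) _ hk M)).
by under eq_bigr do rewrite ger0_norm //; rewrite l1 expr1n mul1r.
Qed.

Definition hull_inf x := inf [set sqnorm z | z in orbit_hull x].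

Lemma has_inf_hull x B : l2_le x B -> has_inf [set sqnorm z | z in orbit_hull x].
Proof.
move=> hx; split; first by exists (sqnorm x), x => //; exact: orbit_hull_self.
exists 0 => _ [z hz <-]; exact: l2_le_ge0 (l2_le_sqnorm (orbit_hull_l2 hx hz)).
Qed.

Lemma hull_inf_ge0 x B : l2_le x B -> 0 <= hull_inf x.
Proof.
move=> hx; apply: lb_le_inf (has_inf_hull hx).1 _ => _ [z hz <-].
exact: l2_le_ge0 (l2_le_sqnorm (orbit_hull_l2 hx hz)).
Qed.

Lemma hull_inf_le x B z : l2_le x B -> orbit_hull x z -> hull_inf x <= sqnorm z.
Proof. by move=> hx hz; apply: ge_inf; [exact: (has_inf_hull hx).2 | exists z]. Qed.

Lemma hull_inf_adherent x B d : l2_le x B -> 0 < d ->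
  exists2 z, orbit_hull x z & sqnorm z < hull_inf x + d.
Proof. by move=> hx /inf_adherent/(_ (has_inf_hull hx)) [_ [z hz <-]]; exists z. Qed.


Lemma cesaro_l2_eventually x B d : l2_le x B -> 0 < d ->
  exists N, forall n, (N <= n)%N -> l2_le (A x n) (hull_inf x + d).
Proof.
move=> hx d_gt0; set c := hull_inf x; have c_ge0 : 0 <= c := hull_inf_ge0 hx.
have d3_gt0 : 0 < d / 3 by rewrite divr_gt0.
have [z hz lt_z] := hull_inf_adherent hx d3_gt0.
pose t := d / 3 / (c + d / 3).
have t_gt0 : 0 < t by rewrite divr_gt0 // ltr_wpDl.
have tV_gt0 : 0 < 1 + t^-1 by rewrite ltr_wpDr ?invr_ge0 ?ltW.
have [N hN] := cesaro_sub_hull_small hx hz (divr_gt0 d3_gt0 tV_gt0).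
exists N => n /hN hdiff M.
apply: le_trans (sqsum_le_split M (A x n) (A z n) t_gt0) _.
have hAz := l2_le_cesaro n (l2_le_sqnorm (orbit_hull_l2 hx hz)) M.
have e1 : (1 + t) * (c + d / 3) = c + 2 * (d / 3) by rewrite /t; field; lra.
have e2 : (1 + t^-1) * (d / 3 / (1 + t^-1)) = d / 3 by field; lra.
have := ler_wpM2l (ltW tV_gt0) (hdiff M); rewrite e2.
have := ler_wpM2l (ltW (ltr_wpDl ler01 t_gt0)) (le_trans hAz (ltW lt_z)).
rewrite -/c e1; lra.
Qed.

Lemma cesaro_unif_cauchy_l2 x B : l2_le x B -> unif_cauchy (A x).
Proof.
move=> hx e e_gt0; pose d := e ^+ 2 / 8.
have d_gt0 : 0 < d by rewrite divr_gt0 ?exprn_gt0.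
have [N hN] := cesaro_l2_eventually hx d_gt0.
exists (maxn N 1) => n m; rewrite !geq_max => /andP[hn n_gt0] /andP[hm m_gt0] i.
pose mid i := (A x n i + A x m i) / 2.
have hmid : orbit_hull x mid by apply: orbit_hull_midpoint; exact: orbit_hull_cesaro.
have [N1 hN1] := sqnorm_adherent (orbit_hull_l2 hx hmid) d_gt0.
have le_c := hull_inf_le hx hmid.
pose M := maxn N1 i.+1.
have hsq : (A x n i - A x m i) ^+ 2 <= sqsum M (fun i => A x n i - A x m i).
  exact: sqr_le_sqsum (leq_maxr N1 i.+1).
have hmidM : sqsum N1 mid <= sqsum M mid := le_sqsum mid (leq_maxl N1 i.+1).
have [hSn hSm] := (hN n hn M, hN m hm M).
(* parallelogram law: |A_n x - A_m x|^2 <= 4 (c + d) - 4 |mid|^2 <= 8 d *)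
rewrite sqsum_parallelogram -/mid in hsq.
apply: normr_le_of_sqr; first exact: ltW.
have e2 : e ^+ 2 = 8 * d by rewrite /d; field.
lra.
Qed.

Lemma cesaro_trunc_approx x e : in_c0 x -> 0 < e ->
  exists M, forall n i, `|A x n i - A (trunc M x) n i| <= e.
Proof.
move=> hx /(trunc_approx hx) [M hM]; exists M => n i.
have x_linf := in_c0_in_linf hx.
rewrite -cesaro_sub //; last exact: in_linf_trunc.
exact: normr_cesaro_le (hM M (leqnn M)).
Qed.

Lemma cesaro_unif_cauchy x : in_c0 x -> unif_cauchy (A x).
Proof.
move=> hx; apply: unif_cauchy_approx => e /(cesaro_trunc_approx hx) [M hM].
by exists (A (trunc M x)) => //; exact: cesaro_unif_cauchy_l2 (l2_le_trunc M x).
Qed.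

Lemma in_c0_cesaro x n : in_c0 x -> in_c0 (A x n).
Proof.
move=> hx; apply: in_c0_approx => e /(cesaro_trunc_approx hx) [M hM].
exists (A (trunc M x) n) => //.
exact: l2_le_in_c0 (l2_le_cesaro n (l2_le_trunc M x)).
Qed.

End DunfordSchwartz.

Theorem theorem3p3 (R : realType) (T : (nat -> R) -> (nat -> R)) :
  dunford_schwartz T ->
  forall x : nat -> R, in_c0 x ->
  exists xh : nat -> R, in_c0 xh /\
    (fun n => norm_inf (fun i => ds_cesaro T x n i - xh i)) @ \oo --> (0 : R).
Proof.
move=> [T_linf T_linear T_l1 T_norm_inf] x hx.
have cesaro_c0 n := in_c0_cesaro T_linf T_linear T_l1 T_norm_inf n hx.
have := cesaro_unif_cauchy T_linf T_linear T_l1 T_norm_inf hx.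
move=> /unif_cauchy_cvg [xh hxh]; exists xh; split.
- exact: unif_cvg_in_c0 cesaro_c0 hxh.
- exact: unif_cvg_norm_inf hxh.
Qed.
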